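(* Let $k\in\mathbb N$ with $k\geq 3$. The family of sets $R_{i,j}$ with $i\in\{k-3,k-2\}$ and $j\in\mathbb Z$ satisfying $-F(i+1)\geq j\geq 1-F(k)$ (the $k$-th standard Fibonacci-like partition of the second kind) consists of $F(k)$ sets which are pairwise disjoint and whose union is $\{n\in\mathbb N\mid n\geq F(k)\}$.
   Context: $\mathbb N=\{1,2,\dots\}$, $\varphi=\frac{1+\sqrt5}{2}$, $a(n)=\lfloor n\varphi\rfloor$. $F$ is the Fibonacci sequence with $F(0)=0$, $F(1)=F(2)=1$, $F(n)=F(n-1)+F(n-2)$. For $i\in\mathbb Z^{\geq 0}$, $j\in\mathbb Z$: $f_{i,j}(n)=F(i+1)a(n)+F(i)n-j$ ($n\in\mathbb N$) and $R_{i,j}=\{f_{i,j}(n)\mid n\in\mathbb N\}$. *)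

From Stdlib Require Import Reals ZArith List Lia Lra.
Open Scope Z_scope.

Definition phi : R := ((1 + sqrt 5) / 2)%R.

(* a(n) = floor(n * phi); Int_part is the floor function on R *)
Definition a (n : nat) : Z := Int_part (INR n * phi).

Fixpoint F (n : nat) : Z :=
  match n with
  | O => 0
  | S O => 1
  | S ((S m) as p) => F p + F m
  end.

Definition f (i : nat) (j : Z) (n : nat) : Z :=
  F (S i) * a n + F i * Z.of_nat n - j.

Definition Rij (i : nat) (j : Z) (m : Z) : Prop :=
  exists n : nat, (1 <= n)%nat /\ m = f i j n.

Definition idx (k : nat) (p : nat * Z) : Prop :=
  (fst p = (k - 3)%nat \/ fst p = (k - 2)%nat) /\
  1 - F k <= snd p <= - F (S (fst p)).

(* Let x = frac(n phi), positive for n >= 1 since phi is irrational. As phi^2 = phi + 1,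
   a(n+1) - a(n) is 1 or 2, and it is 2 only when n = a(n') for some n' >= 1; moreover
   a(a(n')) = a(n') + n' - 1 and a(a(n') + 1) = a(n') + n' + 1.
   Write k = t + 3 and s(n) = f_{t,-F(t+1)}(n). Then s(1) = F(k), and s(n+1) - s(n) is
   F(t+2), or F(t+3) exactly when n = a(n'). The integers >= F(k) are thus tiled by the
   blocks [s(n), s(n+1)): the first F(t+2) elements of block n are the values f_{t,j}(n),
   and when the block is long its last F(t+1) elements are the values
   f_{t+1,j}(n') = s(a(n')) - j. *)

From Stdlib Require Import Reals ZArith List Lia Lra.
(* Imported after [Reals], whose [Rtopology] exports a record field [f] shadowing [Defs.f]. *)
From Pilot Require Import Defs.
Open Scope Z_scope.

Lemma phi_sq : (phi * phi = phi + 1)%R.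
Proof. unfold phi. pose proof (sqrt_sqrt 5 ltac:(lra)). nra. Qed.

Lemma phi_bounds : (1.6 < phi < 1.625)%R.
Proof. unfold phi. pose proof (sqrt_sqrt 5 ltac:(lra)). pose proof (sqrt_pos 5). nra. Qed.

Lemma five_dvd_of_square (k : Z) : (5 | k * k) -> (5 | k).
Proof.
  intros [c Hc]. exists (k / 5).
  pose proof (Z.div_mod k 5 ltac:(lia)). pose proof (Z.mod_pos_bound k 5 ltac:(lia)).
  assert (Hr : k mod 5 = 0 \/ k mod 5 = 1 \/ k mod 5 = 2 \/ k mod 5 = 3 \/ k mod 5 = 4) by lia.
  destruct Hr as [Hr|[Hr|[Hr|[Hr|Hr]]]]; rewrite Hr in H; nia.
Qed.

Lemma square_eq_five_square (k n : Z) : k * k = 5 * (n * n) -> n = 0.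
Proof.
  remember (Z.abs_nat n) as N eqn:HN. revert k n HN.
  induction N as [N IH] using lt_wf_ind. intros k n HN Hkn.
  destruct (Z.eq_dec n 0) as [|Hn]; [assumption | exfalso].
  destruct (five_dvd_of_square k ltac:(exists (n * n); lia)) as [q ->].
  destruct (five_dvd_of_square n ltac:(exists (q * q); nia)) as [r ->].
  assert (r = 0) by (apply (IH (Z.abs_nat r)) with (k := q); nia).
  lia.
Qed.

Lemma mul_phi_not_integer (n : nat) (z : Z) : (1 <= n)%nat -> (INR n * phi <> IZR z)%R.
Proof.
  intros Hn E. pose proof (sqrt_sqrt 5 ltac:(lra)) as S5.
  assert (Hs : (INR n * sqrt 5 = IZR (2 * z - Z.of_nat n))%R).
  { rewrite minus_IZR, mult_IZR, <- INR_IZR_INZ, <- E. unfold phi. field. }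
  assert (Hsq : (2 * z - Z.of_nat n) * (2 * z - Z.of_nat n) = 5 * (Z.of_nat n * Z.of_nat n)).
  { apply eq_IZR. rewrite !mult_IZR, <- Hs, <- INR_IZR_INZ.
    rewrite <- S5 at 3. ring. }
  apply square_eq_five_square in Hsq. lia.
Qed.

Lemma a_eq_of_decomp (n : nat) (z : Z) (d : R) :
  (INR n * phi = IZR z + d)%R -> (0 <= d < 1)%R -> a n = z.
Proof. intros E Hd. symmetry. exact (proj1 (Int_part_frac_part_spec _ _ _ Hd E)). Qed.

Lemma a_decomp (n : nat) : (INR n * phi = IZR (a n) + frac_part (INR n * phi))%R.
Proof. apply Rplus_Int_part_frac_part. Qed.

Lemma frac_mul_phi_bounds (n : nat) : (1 <= n)%nat -> (0 < frac_part (INR n * phi) < 1)%R.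
Proof.
  intros Hn. destruct (base_fp (INR n * phi)) as [H0 H1]. split; [|lra].
  destruct (Rle_lt_or_eq_dec _ _ (Rge_le _ _ H0)) as [|E]; [assumption | exfalso].
  apply (mul_phi_not_integer n (a n) Hn). rewrite (a_decomp n), <- E. ring.
Qed.

Lemma a_ge (n : nat) : Z.of_nat n <= a n.
Proof.
  enough (Z.of_nat n < a n + 1) by lia. apply lt_IZR.
  rewrite plus_IZR, <- INR_IZR_INZ.
  pose proof (a_decomp n). pose proof (base_fp (INR n * phi)). pose proof phi_bounds.
  pose proof (pos_INR n). nra.
Qed.

Lemma a_nonneg (n : nat) : 0 <= a n.
Proof. pose proof (a_ge n). lia. Qed.

Lemma INR_to_nat_a (n : nat) : INR (Z.to_nat (a n)) = IZR (a n).
Proof. rewrite INR_IZR_INZ, Z2Nat.id by apply a_nonneg. reflexivity. Qed.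

Lemma a_succ (n : nat) :
  a (S n) = a n + 1 \/
  (a (S n) = a n + 2 /\ exists n', (1 <= n')%nat /\ Z.of_nat n = a n').
Proof.
  pose proof (a_decomp n) as E. set (x := frac_part (INR n * phi)) in E.
  destruct (base_fp (INR n * phi)) as [Hx0 Hx1]. fold x in Hx0, Hx1. pose proof phi_bounds.
  assert (ES : (INR (S n) * phi = IZR (a n) + (x + phi))%R) by (rewrite S_INR; lra).
  destruct (Rlt_le_dec (x + phi) 2) as [Hlt|Hge].
  - left. apply (a_eq_of_decomp _ _ (x + phi - 1)); [rewrite plus_IZR; lra | lra].
  - right. split; [apply (a_eq_of_decomp _ _ (x + phi - 2)); [rewrite plus_IZR; lra | lra]|].
    assert (Hgt : (2 < x + phi)%R).
    { destruct (Rle_lt_or_eq_dec _ _ Hge) as [|E2]; [assumption | exfalso].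
      apply (mul_phi_not_integer (S n) (a n + 2) ltac:(lia)). rewrite plus_IZR. lra. }
    pose proof (a_ge n).
    (* n' = a(n) - n + 1 works since n' phi = n + phi (1 - x) and 0 <= phi (1 - x) < 1 *)
    exists (Z.to_nat (a n - Z.of_nat n + 1)). split; [lia|]. symmetry.
    apply (a_eq_of_decomp _ _ (phi * (1 - x))).
    + rewrite INR_IZR_INZ, Z2Nat.id by lia. rewrite plus_IZR, minus_IZR, <- INR_IZR_INZ.
      replace (IZR (a n)) with (INR n * phi - x)%R by lra.
      transitivity (INR n * (phi * phi - phi) + phi * (1 - x))%R; [ring|]. rewrite phi_sq. ring.
    + pose proof phi_sq. split; nra.
Qed.

Lemma a_of_a (n : nat) : (1 <= n)%nat ->
  a (Z.to_nat (a n)) = a n + Z.of_nat n - 1 /\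
  a (S (Z.to_nat (a n))) = a n + Z.of_nat n + 1.
Proof.
  intros Hn. pose proof (a_decomp n) as E. pose proof (frac_mul_phi_bounds n Hn) as Hx.
  set (x := frac_part (INR n * phi)) in E, Hx. pose proof phi_bounds. pose proof phi_sq.
  (* a(n) phi = (n phi - x) phi = n phi + n - x phi *)
  assert (Ea : (IZR (a n) * phi = IZR (a n + Z.of_nat n - 1) + (1 - x * (phi - 1)))%R).
  { rewrite minus_IZR, plus_IZR, <- INR_IZR_INZ.
    replace (IZR (a n)) with (INR n * phi - x)%R by lra.
    transitivity (INR n * (phi * phi) - x * phi)%R; [ring|]. rewrite phi_sq. ring. }
  split.
  - apply (a_eq_of_decomp _ _ (1 - x * (phi - 1))); [rewrite INR_to_nat_a; lra | nra].
  - apply (a_eq_of_decomp _ _ (phi - x * (phi - 1) - 1)); [|nra].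
    rewrite S_INR, INR_to_nat_a, !plus_IZR. rewrite minus_IZR, plus_IZR in Ea. lra.
Qed.

Lemma a_one : a 1 = 1.
Proof. apply (a_eq_of_decomp _ _ (phi - 1)); pose proof phi_bounds; simpl; lra. Qed.

Lemma a_lt_succ (n : nat) : a n < a (S n).
Proof. destruct (a_succ n) as [|[]]; lia. Qed.

Lemma F_SS (n : nat) : F (S (S n)) = F (S n) + F n.
Proof. reflexivity. Qed.

Lemma F_succ_pos (n : nat) : 1 <= F (S n).
Proof.
  enough (0 <= F n /\ 1 <= F (S n)) by tauto.
  induction n as [|n IH]; [simpl; lia | rewrite F_SS; lia].
Qed.

Lemma f_succ_arg (i : nat) (j : Z) (n : nat) :
  f i j (S n) = f i j n + F (S i) * (a (S n) - a n) + F i.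
Proof. unfold f. rewrite Nat2Z.inj_succ. lia. Qed.

Lemma f_succ_index (i : nat) (j : Z) (n : nat) : (1 <= n)%nat ->
  f (S i) j n = f i (j - F (S i)) (Z.to_nat (a n)).
Proof.
  intros Hn. unfold f. rewrite (proj1 (a_of_a n Hn)), F_SS, Z2Nat.id by apply a_nonneg.
  ring.
Qed.

Section Tiling.

Variable h : nat -> Z.
Hypothesis h_incr : forall n, h n < h (S n).

Lemma incr_lt (n1 n2 : nat) : (n1 < n2)%nat -> h n1 < h n2.
Proof.
  induction 1 as [|n2 _ IH]; [apply h_incr|]. specialize (h_incr n2). lia.
Qed.

Lemma incr_le (n1 n2 : nat) : (n1 <= n2)%nat -> h n1 <= h n2.
Proof. intros H. destruct (Nat.eq_dec n1 n2) as [->|]; [lia|]. apply Z.lt_le_incl, incr_lt. lia. Qed.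

Lemma incr_inj (n1 n2 : nat) : h n1 = h n2 -> n1 = n2.
Proof.
  intros E. destruct (lt_eq_lt_dec n1 n2) as [[H|H]|H]; auto;
    apply incr_lt in H; lia.
Qed.

Lemma incr_shift (n d : nat) : h n + Z.of_nat d <= h (n + d).
Proof.
  induction d as [|d IH]; [rewrite Nat.add_0_r; lia|].
  rewrite Nat.add_succ_r. specialize (h_incr (n + d)). lia.
Qed.

Lemma tile_exists (n0 : nat) (m : Z) : h n0 <= m ->
  exists n, (n0 <= n)%nat /\ h n <= m < h (S n).
Proof.
  intros Hm.
  assert (Hd : forall d, m < h (n0 + d) -> exists n, (n0 <= n)%nat /\ h n <= m < h (S n)).
  { induction d as [|d IH]; intros Hd; [rewrite Nat.add_0_r in Hd; lia|].
    destruct (Z_lt_le_dec m (h (n0 + d))) as [|Hle]; [now apply IH|].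
    exists (n0 + d)%nat. rewrite Nat.add_succ_r in Hd. lia. }
  apply (Hd (Z.to_nat (m - h n0 + 1))).
  pose proof (incr_shift n0 (Z.to_nat (m - h n0 + 1))). lia.
Qed.

Lemma tile_unique (n1 n2 : nat) (m : Z) :
  h n1 <= m < h (S n1) -> h n2 <= m < h (S n2) -> n1 = n2.
Proof.
  intros H1 H2. destruct (lt_eq_lt_dec n1 n2) as [[H|H]|H]; auto; exfalso;
    apply incr_le in H; lia.
Qed.

End Tiling.

Lemma interval_listing (i : nat) (lo hi : Z) : lo <= hi + 1 ->
  exists l : list (nat * Z), NoDup l /\
    (forall p, In p l <-> fst p = i /\ lo <= snd p <= hi) /\
    Z.of_nat (length l) = hi + 1 - lo.
Proof.
  intros Hlo. exists (map (fun d => (i, lo + Z.of_nat d)) (seq 0 (Z.to_nat (hi + 1 - lo)))).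
  split; [|split].
  - apply NoDup_map_NoDup_ForallPairs; [|apply seq_NoDup].
    intros d1 d2 _ _ E. injection E. lia.
  - intros [i' j]. rewrite in_map_iff. simpl. split.
    + intros [d [E Hd]]. apply in_seq in Hd. injection E. lia.
    + intros [-> Hj]. exists (Z.to_nat (j - lo)). rewrite in_seq. split; [f_equal|]; lia.
  - rewrite length_map, length_seq. lia.
Qed.

Section Partition.

Variable t : nat.

Let start (n : nat) : Z := f t (- F (S t)) n.

Lemma idx_cases (i : nat) (j : Z) : idx (S (S (S t))) (i, j) <->
  (i = t /\ 1 - F (S (S (S t))) <= j <= - F (S t)) \/
  (i = S t /\ 1 - F (S (S (S t))) <= j <= - F (S (S t))).
Proof.
  unfold idx. simpl fst; simpl snd. rewrite !Nat.sub_succ, !Nat.sub_0_r.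
  split; [intros [[-> | ->] Hj]; auto | intros [[-> Hj] | [-> Hj]]; auto].
Qed.

Lemma idx_listing : exists l : list (nat * Z),
  NoDup l /\ (forall p, In p l <-> idx (S (S (S t))) p) /\
  Z.of_nat (length l) = F (S (S (S t))).
Proof.
  pose proof (F_succ_pos t). pose proof (F_succ_pos (S t)). rewrite !F_SS in *.
  destruct (interval_listing t (1 - F (S (S (S t)))) (- F (S t)))
    as (l1 & Hnd1 & Hin1 & Hlen1); [rewrite !F_SS; lia|].
  destruct (interval_listing (S t) (1 - F (S (S (S t)))) (- F (S (S t))))
    as (l2 & Hnd2 & Hin2 & Hlen2); [rewrite !F_SS; lia|].
  exists (l1 ++ l2). split; [|split].
  - apply NoDup_app; [assumption | assumption |].
    intros p H1 H2. apply Hin1 in H1. apply Hin2 in H2. lia.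
  - intros [i j]. rewrite in_app_iff, Hin1, Hin2, idx_cases. reflexivity.
  - rewrite length_app, Nat2Z.inj_add, Hlen1, Hlen2, !F_SS. lia.
Qed.

Lemma start_succ (n : nat) :
  start (S n) = start n + F (S (S t)) \/
  (start (S n) = start n + F (S (S (S t))) /\
   exists n', (1 <= n')%nat /\ Z.of_nat n = a n').
Proof.
  unfold start. rewrite f_succ_arg, !F_SS.
  destruct (a_succ n) as [E | [E Hn']]; rewrite E; [left | right; split]; auto; lia.
Qed.

Lemma start_incr (n : nat) : start n < start (S n).
Proof.
  pose proof (F_succ_pos (S t)). pose proof (F_succ_pos (S (S t))).
  destruct (start_succ n) as [| []]; lia.
Qed.

Lemma start_one : start 1 = F (S (S (S t))).
Proof. unfold start, f. rewrite a_one, !F_SS. simpl. lia. Qed.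

Lemma f_upper (j : Z) (n : nat) : (1 <= n)%nat ->
  f (S t) j n = start (Z.to_nat (a n)) - j.
Proof. intros Hn. rewrite f_succ_index by assumption. unfold start, f. lia. Qed.

Lemma start_succ_at_a (n : nat) : (1 <= n)%nat ->
  start (S (Z.to_nat (a n))) = start (Z.to_nat (a n)) + F (S (S (S t))).
Proof.
  intros Hn. unfold start. rewrite f_succ_arg.
  destruct (a_of_a n Hn) as [E1 E2]. rewrite E1, E2, !F_SS. lia.
Qed.

Lemma member_block (i : nat) (j : Z) (n : nat) :
  idx (S (S (S t))) (i, j) -> (1 <= n)%nat ->
  exists N, (1 <= N)%nat /\ start N <= f i j n < start (S N) /\
    ((i = t /\ N = n /\ f i j n < start N + F (S (S t))) \/
     (i = S t /\ Z.of_nat N = a n /\ start N + F (S (S t)) <= f i j n)).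
Proof.
  intros Hij Hn. pose proof (F_succ_pos t). pose proof (F_succ_pos (S t)).
  rewrite idx_cases in Hij. destruct Hij as [[-> Hj] | [-> Hj]].
  - exists n.
    assert (Hstep : start n + F (S (S t)) <= start (S n)).
    { destruct (start_succ n) as [| []]; rewrite ?(F_SS (S t)) in *; lia. }
    assert (Hf : f t j n = start n + (- F (S t) - j)) by (unfold start, f; lia).
    rewrite Hf, !F_SS in *. lia.
  - exists (Z.to_nat (a n)). pose proof (a_ge n).
    rewrite f_upper, start_succ_at_a by assumption. rewrite !F_SS in *. lia.
Qed.

Lemma f_family_injective (i1 i2 n1 n2 : nat) (j1 j2 : Z) :
  idx (S (S (S t))) (i1, j1) -> idx (S (S (S t))) (i2, j2) ->
  (1 <= n1)%nat -> (1 <= n2)%nat -> f i1 j1 n1 = f i2 j2 n2 ->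
  (i1, j1) = (i2, j2).
Proof.
  intros H1 H2 Hn1 Hn2 E.
  destruct (member_block i1 j1 n1 H1 Hn1) as (N1 & _ & HN1 & C1).
  destruct (member_block i2 j2 n2 H2 Hn2) as (N2 & _ & HN2 & C2).
  rewrite E in HN1, C1.
  assert (N1 = N2) as <- by exact (tile_unique start start_incr N1 N2 _ HN1 HN2).
  destruct C1 as [(-> & <- & C1) | (-> & EN1 & C1)];
    destruct C2 as [(-> & <- & C2) | (-> & EN2 & C2)]; try lia.
  - unfold f in E. f_equal. lia.
  - assert (n1 = n2) as <- by (apply (incr_inj a a_lt_succ); lia).
    unfold f in E. f_equal. lia.
Qed.

Lemma f_family_lower_bound (i : nat) (j : Z) (n : nat) :
  idx (S (S (S t))) (i, j) -> (1 <= n)%nat -> F (S (S (S t))) <= f i j n.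
Proof.
  intros Hij Hn. destruct (member_block i j n Hij Hn) as (N & HN & HfN & _).
  pose proof (incr_le start start_incr 1 N HN). rewrite start_one in *. lia.
Qed.

Lemma f_family_covers (m : Z) : F (S (S (S t))) <= m ->
  exists i j n, idx (S (S (S t))) (i, j) /\ (1 <= n)%nat /\ m = f i j n.
Proof.
  intros Hm. rewrite <- start_one in Hm.
  destruct (tile_exists start start_incr 1 m Hm) as (N & HN & HmN).
  pose proof (F_succ_pos t). pose proof (F_succ_pos (S t)).
  destruct (Z_lt_le_dec m (start N + F (S (S t)))) as [Hlow | Hhigh].
  - exists t, (start N - F (S t) - m), N. rewrite idx_cases, !F_SS in *.
    split; [left; split; [reflexivity | lia]|]. split; [assumption|]. unfold start, f. lia.
  - destruct (start_succ N) as [E | [E (n' & Hn' & EN)]]; [lia|].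
    assert (HN' : Z.to_nat (a n') = N) by lia.
    exists (S t), (start N - m), n'. rewrite idx_cases, !F_SS in *.
    split; [right; split; [reflexivity | lia]|]. split; [assumption|].
    rewrite f_upper, HN' by assumption. lia.
Qed.

End Partition.

Theorem corollary3p9 (k : nat) (hk : (3 <= k)%nat) :
  (* the family consists of F(k) sets (indexed without repetition) *)
  (exists l : list (nat * Z),
      NoDup l /\ (forall p, In p l <-> idx k p) /\ Z.of_nat (length l) = F k) /\
  (* pairwise disjoint *)
  (forall p q : nat * Z, idx k p -> idx k q -> p <> q ->
      forall m : Z, ~ (Rij (fst p) (snd p) m /\ Rij (fst q) (snd q) m)) /\
  (* union is { n in N | n >= F(k) } *)
  (forall m : Z,
      (exists p : nat * Z, idx k p /\ Rij (fst p) (snd p) m) <->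
      (1 <= m /\ F k <= m)).
Proof.
  destruct k as [| [| [| t]]]; try lia.
  split; [apply idx_listing | split].
  - intros [i1 j1] [i2 j2] H1 H2 Hne m [[n1 [Hn1 ->]] [n2 [Hn2 E]]].
    apply Hne. exact (f_family_injective t i1 i2 n1 n2 j1 j2 H1 H2 Hn1 Hn2 E).
  - intros m. split.
    + intros [[i j] [Hij [n [Hn ->]]]]. cbn [fst snd].
      pose proof (f_family_lower_bound t i j n Hij Hn). pose proof (F_succ_pos (S (S t))). lia.
    + intros [_ Hm]. destruct (f_family_covers t m Hm) as (i & j & n & Hij & Hn & ->).
      exists (i, j). split; [assumption|]. exists n. split; [assumption | reflexivity].
Qed.
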